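(* Consider problem (P) under Assumptions (A1)–(A3). Let $\bar{x}\in\mathbb{R}^n$ be a local minimizer for (P). Then $\bar{x}\in\mathcal{X}$ and $\bar{x}$ is critical for (P).
   Context: Problem (P): minimize $f(x)$ subject to $x\in\mathcal{X}:=\bar{\mathcal{X}}\cap\{x\in\mathbb{R}^n : x_i\in\mathbb{Z}\ \forall i\in\mathcal{I}\}$, where $\bar{\mathcal{X}}\subseteq\mathbb{R}^n$ is a closed convex polyhedral set, $\mathcal{I}\subseteq\{1,\dots,n\}$, $\mathcal{X}\neq\emptyset$, and $f:\mathbb{R}^n\to\mathbb{R}$. Partition $x=(u,z)$, where $u$ collects the components with indices not in $\mathcal{I}$ (real-valued) and $z$ those with indices in $\mathcal{I}$ (integer-valued). Standing assumptions: (A1) $f$ is continuously differentiable and $\nabla f$ is locally Lipschitz continuous; (A2) $f(u,z)=f_1(u)+\langle f_2,z\rangle$ for a smooth function $f_1$ and a fixed vector $f_2$; (A3) the set $\{z : (u,z)\in\mathcal{X}\}$ of feasible integer parts is bounded. Partial localization: $\|x\|_{PL}$ denotes a polyhedral norm (the $\ell_1$-norm $\sum_{i\notin\mathcal{I}}|x_i|$ or the $\ell_\infty$-norm $\max_{i\notin\mathcal{I}}|x_i|$) applied only to the components with indices not in $\mathcal{I}$; it is a seminorm. The closed PL-ball is $\mathbb{B}_{PL}(x,\Delta):=\{w\in\mathbb{R}^n: \|w-x\|_{PL}\le\Delta\}$. Local minimizer: $\bar x\in\mathcal{X}$ such that there is $\Delta>0$ with $f(\bar x)\le f(x)$ for all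 $x\in\mathcal{X}\cap\mathbb{B}_{PL}(\bar x,\Delta)$. Criticality measure: for $x\in\mathcal{X}$ and $\Delta\ge 0$, $\Psi(x;\Delta):=\max\{\langle\nabla f(x),x-w\rangle : w\in\mathcal{X}\cap\mathbb{B}_{PL}(x,\Delta)\}$ (so $\Psi\ge0$). A point $\bar x\in\mathcal{X}$ is $\Delta$-critical if $\Psi(\bar x;\Delta)=0$, and critical if it is $\Delta$-critical for some $\Delta>0$. *)

From HB Require Import structures.
From mathcomp Require Import all_boot all_order all_algebra.
From mathcomp Require Import all_classical all_reals all_analysis.
Set Implicit Arguments. Unset Strict Implicit. Unset Printing Implicit Defensive.
Import Order.TTheory GRing.Theory Num.Theory.
Import numFieldNormedType.Exports.
Local Open Scope classical_set_scope.
Local Open Scope ring_scope.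

Section MixedInteger.
Variables (R : realType) (n : nat).

Definition polyhedron (m : nat) (A : 'M[R]_(m, n)) (b : 'cV[R]_m)
  : set 'rV[R]_n := [set x | forall j, (A *m x^T) j 0 <= b j 0].

Definition feasible (I : {set 'I_n}) (m : nat) (A : 'M[R]_(m, n))
  (b : 'cV[R]_m) : set 'rV[R]_n :=
  [set x | polyhedron A b x /\ (forall i, i \in I -> x 0 i \is a Num.int)].

Definition PLnorm (linf : bool) (I : {set 'I_n}) (x : 'rV[R]_n) : R :=
  if linf then \big[Num.max/0]_(i | i \notin I) `|x 0 i|
  else \sum_(i | i \notin I) `|x 0 i|.

Definition PLball (linf : bool) (I : {set 'I_n}) (x : 'rV[R]_n) (D : R)
  : set 'rV[R]_n := [set w | PLnorm linf I (w - x) <= D].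

Definition grad (f : 'rV[R]_n -> R) (x : 'rV[R]_n) : 'rV[R]_n :=
  \row_i ('D_(delta_mx 0 i) f x).

Definition dotv (u v : 'rV[R]_n) : R := \sum_i u 0 i * v 0 i.

Definition Psi linf I m (A : 'M[R]_(m, n)) b (f : 'rV[R]_n -> R)
  (x : 'rV[R]_n) (D : R) : R :=
  sup [set dotv (grad f x) (x - w) | w in feasible I A b `&` PLball linf I x D].

Definition Delta_critical linf I m (A : 'M[R]_(m, n)) b f x D : Prop :=
  Psi linf I A b f x D = 0.

Definition critical linf I m (A : 'M[R]_(m, n)) b f x : Prop :=
  feasible I A b x /\ exists2 D : R, 0 < D & Delta_critical linf I A b f x D.

Definition local_minimizer linf I m (A : 'M[R]_(m, n)) b
  (f : 'rV[R]_n -> R) (xb : 'rV[R]_n) : Prop :=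
  feasible I A b xb /\
  exists2 D : R, 0 < D &
    forall x, feasible I A b x -> PLball linf I xb D x -> f xb <= f x.

Definition assumption_A1 (f : 'rV[R]_n -> R) : Prop :=
  (forall x, differentiable f x) /\ continuous (grad f) /\
  (forall x, exists2 r : R, 0 < r & exists L : R,
     forall y z, ball x r y -> ball x r z ->
       `|grad f y - grad f z| <= L * `|y - z|).

(* (A2): f(u,z) = f1(u) + <f2, z>, f1 smooth (C^1) and depending on u only *)
Definition assumption_A2 (I : {set 'I_n}) (f : 'rV[R]_n -> R) : Prop :=
  exists (f1 : 'rV[R]_n -> R) (f2 : 'rV[R]_n),
    (forall x y : 'rV[R]_n, (forall i, i \notin I -> x 0 i = y 0 i) -> f1 x = f1 y) /\
    (forall x, differentiable f1 x) /\ continuous (grad f1) /\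
    (forall x, f x = f1 x + \sum_(i in I) f2 0 i * x 0 i).

Definition assumption_A3 I m (A : 'M[R]_(m, n)) b : Prop :=
  exists M : R, forall x, feasible I A b x -> forall i, i \in I -> `|x 0 i| <= M.

End MixedInteger.

(* The integer parts of feasible points are bounded integers, so only
   finitely many integer configurations occur.  For feasible w near xb, let
   x0 be w with its continuous part replaced by that of xb.  Over the finitely
   many possible x0, the positive values of f x0 - f xb and the positive
   constraint violations are bounded below by some del > 0, while moving from
   x0 to w changes <grad f xb, .> and each constraint by at most del / 2 once
   w is close enough to xb.  Hence x0 is feasible, and either f x0 > f xb,
   which dominates the gradient term, or f x0 = f xb, in which case the
   segment from x0 towards w stays feasible and local minimality gives a
   nonnegative directional derivative.  As f is linear in the integer part,
   <grad f xb, x0 - xb> = f x0 - f xb, so <grad f xb, w - xb> >= 0. *)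
Set Warnings "-notation-overridden,-ambiguous-paths,-parsing,-coercions".
From HB Require Import structures.
From mathcomp Require Import all_boot all_order all_algebra.
From mathcomp Require Import all_classical all_reals all_analysis.
From mathcomp Require Import lra zify.
Set Implicit Arguments. Unset Strict Implicit.
Import Order.TTheory GRing.Theory Num.Theory.
Import numFieldNormedType.Exports.
Local Open Scope classical_set_scope.
Local Open Scope ring_scope.

Section DirectionalDerivative.
Variables (R : realType) (V : normedModType R).
Implicit Types (f : V -> R) (x v : V).

Lemma derive_affine_line f x v (c : R) :
  (forall h : R, f (h *: v + x) = f x + h * c) -> 'D_v f x = c.
Proof.
move=> fE; rewrite /derive; apply: cvg_lim; first exact: norm_hausdorff.
apply: (@cvg_near_cst _ _ c _ (0 : R)^' _).
near=> h; rewrite /= fE addrC addKr.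
have h_neq0 : h != 0 by near: h; exact: nbhs_dnbhs_neq.
by rewrite /GRing.scale /= mulKf.
Unshelve. all: by end_near. Qed.

Lemma derive_ge0_segment_min f x v : derivable f x v ->
  (forall t : R, 0 < t -> t <= 1 -> f x <= f (x + t *: v)) -> 0 <= 'D_v f x.
Proof.
move=> df fmin; rewrite /derive.
have right_dnbhs : (0 : R)^'+ `=>` (0 : R)^'.
  move=> P; rewrite /at_right /dnbhs /within /=.
  by apply: filterS => y Py y_gt0; apply: Py; rewrite gt_eqF.
have cv := cvg_trans (cvg_app _ right_dnbhs) df.
rewrite -(cvg_lim (@norm_hausdorff _ _) cv).
apply: limr_ge; first exact: cvgP cv.
near=> h.
have h_gt0 : 0 < h by near: h; exact: nbhs_right_gt.
have h_le1 : h <= 1 by near: h; exact: nbhs_right_le.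
rewrite /= -[_ *: _]/(_ * _) mulr_ge0 //; first by rewrite invr_ge0 ltW.
by rewrite subr_ge0 addrC; exact: fmin.
Unshelve. all: by end_near. Qed.

End DirectionalDerivative.

Lemma exists_pos_lb_fin (R : realFieldType) (T : finType) (g : T -> R) :
  exists2 d, 0 < d & forall k, 0 < g k -> d <= g k.
Proof.
suff [d d_gt0 Hd] : exists2 d, 0 < d &
    forall k, k \in enum T -> 0 < g k -> d <= g k.
  by exists d => // k; apply: Hd; rewrite mem_enum.
elim: (enum T) => [|a s [d d_gt0 Hd]]; first by exists 1.
have [ga_gt0|ga_le0] := ltP 0 (g a).
  exists (Num.min d (g a)); first by rewrite lt_min d_gt0 ga_gt0.
  move=> k; rewrite inE => /orP[/eqP-> _|ks gk]; first by rewrite ge_min lexx orbT.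
  by rewrite ge_min Hd.
exists d => // k; rewrite inE => /orP[/eqP->|ks]; last exact: Hd.
by rewrite ltNge ga_le0.
Qed.

Lemma int_shift_ord (R : archiNumDomainType) (K : nat) (r : R) :
  r \is a Num.int -> `|r| <= K%:R ->
  exists k : 'I_(K.*2).+1, r = (k : nat)%:R - K%:R.
Proof.
move=> r_int r_le; have rz := floorK r_int; set z := Num.floor r in rz *.
have : `|z| <= K%:Z by rewrite -(ler_int R) intr_norm rz.
rewrite ler_norml => /andP[z_ge z_le].
have zK_ge0 : 0 <= z + K%:Z by lia.
have zK_lt : (`|(z + K%:Z)%R|%N < (K.*2).+1)%N by lia.
exists (Ordinal zK_lt) => /=.
by rewrite natr_absz ger0_norm // intrD rz addrK.
Qed.

Section PartialLocalization.
Variables (R : realType) (n : nat) (I : {set 'I_n}) (linf : bool).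
Implicit Types (a v w x : 'rV[R]_n).

Lemma PLnorm_ge0 v : 0 <= PLnorm linf I v.
Proof.
rewrite /PLnorm; case: linf; last by rewrite sumr_ge0.
by elim/big_ind: _ => // p q p_ge0 q_ge0; rewrite le_max p_ge0.
Qed.

Lemma coord_le_PLnorm v i : i \notin I -> `|v 0 i| <= PLnorm linf I v.
Proof.
move=> iI; rewrite /PLnorm; case: linf; rewrite (bigD1 i) //=.
  by rewrite le_max lexx.
by rewrite lerDl sumr_ge0.
Qed.

Lemma PLnorm_le v w : (forall i, i \notin I -> `|v 0 i| <= `|w 0 i|) ->
  PLnorm linf I v <= PLnorm linf I w.
Proof.
move=> vw; rewrite {1}/PLnorm; case: linf vw (coord_le_PLnorm w) (PLnorm_ge0 w).
  move=> vw w_ge w_ge0; elim/big_ind: _ => [//|p q|i iI] /=.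
    by rewrite ge_max => -> ->.
  exact: le_trans (vw i iI) (w_ge i iI).
by move=> vw _ _; apply: ler_sum.
Qed.

Lemma PLnorm_eq0 v : (forall i, i \notin I -> v 0 i = 0) -> PLnorm linf I v = 0.
Proof.
move=> v0; rewrite /PLnorm; case: linf.
  by elim/big_ind: _ => //= [p q -> ->|i iI]; rewrite ?maxxx ?v0 ?normr0.
by rewrite big1 // => i iI; rewrite v0 ?normr0.
Qed.

Lemma dotvDr a v w : dotv a (v + w) = dotv a v + dotv a w.
Proof. by rewrite /dotv -big_split; apply: eq_bigr => i _; rewrite mxE mulrDr. Qed.

Lemma dotvNr a v : dotv a (- v) = - dotv a v.
Proof. by rewrite /dotv -sumrN; apply: eq_bigr => i _; rewrite mxE mulrN. Qed.

Lemma dotvZr a v (t : R) : dotv a (t *: v) = t * dotv a v.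
Proof. by rewrite /dotv mulr_sumr; apply: eq_bigr => i _; rewrite mxE mulrCA. Qed.

Lemma dotv_PLnorm_le a v : (forall i, i \in I -> v 0 i = 0) ->
  `|dotv a v| <= (\sum_i `|a 0 i|) * PLnorm linf I v.
Proof.
move=> vI; apply: le_trans (ler_norm_sum _ _ _) _; rewrite mulr_suml.
apply: ler_sum => i _; rewrite normrM; have [iI|iI] := boolP (i \in I).
  by rewrite vI // normr0 mulr0 mulr_ge0 ?PLnorm_ge0.
by rewrite ler_wpM2l // coord_le_PLnorm.
Qed.

Lemma uniform_dotv_PLnorm_small (J : finType) (a : J -> 'rV[R]_n) (eps : R) :
  0 < eps -> exists2 d, 0 < d & forall j v, (forall i, i \in I -> v 0 i = 0) ->
    PLnorm linf I v <= d -> `|dotv (a j) v| <= eps.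
Proof.
move=> eps_gt0; pose K := \sum_j \sum_i `|a j 0 i| + 1.
have a_ge0 : 0 <= \sum_j \sum_i `|a j 0 i|.
  by apply: sumr_ge0 => j _; exact: sumr_ge0.
have K_gt0 : 0 < K by rewrite /K ltr_wpDl.
exists (eps / K) => [|j v vI v_le]; first by rewrite divr_gt0.
apply: le_trans (dotv_PLnorm_le _ vI) _.
have aj_le : \sum_i `|a j 0 i| <= K.
  rewrite /K (bigD1 j) //= -addrA lerDl addr_ge0 // sumr_ge0 // => k _.
  exact: sumr_ge0.
apply: le_trans (ler_pM _ _ aj_le v_le) _; rewrite ?sumr_ge0 ?PLnorm_ge0 //.
by rewrite mulrCA divff ?mulr1 // gt_eqF.
Qed.

End PartialLocalization.

Lemma mulmx_tr_dotv (R : realType) (n m : nat) (A : 'M[R]_(m, n)) x j :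
  (A *m x^T) j 0 = dotv (row j A) x.
Proof. by rewrite !mxE; apply: eq_bigr => i _; rewrite !mxE. Qed.

Lemma dotv_grad (R : realType) (n : nat) (f : 'rV[R]_n -> R) x v :
  differentiable f x -> dotv (grad f x) v = 'd f x v.
Proof.
move=> df; rewrite {2}(row_sum_delta v) linear_sum /dotv; apply: eq_bigr => i _.
by rewrite linearZ /= mxE deriveE // mulrC.
Qed.

Definition with_int_part (R : realType) (n : nat) (I : {set 'I_n})
  (x w : 'rV[R]_n) : 'rV[R]_n :=
  \row_i (if i \in I then w 0 i else x 0 i).

Section Feasibility.
Variables (R : realType) (n m : nat) (I : {set 'I_n}).
Variables (A : 'M[R]_(m, n)) (b : 'cV[R]_m).
Implicit Types (x y w : 'rV[R]_n).

Lemma polyhedron_segment x y (t : R) : polyhedron A b x -> polyhedron A b y ->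
  0 <= t -> t <= 1 -> polyhedron A b (x + t *: (y - x)).
Proof.
move=> px py t_ge0 t_le1 j; have := px j; have := py j.
rewrite !mulmx_tr_dotv dotvDr dotvZr dotvDr dotvNr.
set X := dotv _ x; set Y := dotv _ y => Y_le X_le.
have : 0 <= (1 - t) * (b j 0 - X) by rewrite mulr_ge0 // subr_ge0.
have : 0 <= t * (b j 0 - Y) by rewrite mulr_ge0 // subr_ge0.
nra.
Qed.

Lemma feasible_segment x y (t : R) : feasible I A b x -> feasible I A b y ->
  (forall i, i \in I -> x 0 i = y 0 i) -> 0 <= t -> t <= 1 ->
  feasible I A b (x + t *: (y - x)).
Proof.
move=> [px x_int] [py _] xy t_ge0 t_le1; split; first exact: polyhedron_segment.
by move=> i iI; rewrite !mxE xy // subrr mulr0 addr0 -xy //; exact: x_int.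
Qed.

Lemma with_int_part_finite x : assumption_A3 I A b ->
  exists (T : finType) (y : T -> 'rV[R]_n),
    forall w, feasible I A b w -> exists k, with_int_part I x w = y k.
Proof.
move=> [M HM]; pose K := Num.bound `|M|.
have M_le : M <= K%:R.
  exact: le_trans (ler_norm M) (ltW (archi_boundP (normr_ge0 M))).
exists {ffun 'I_n -> 'I_(K.*2).+1}.
exists (fun k : {ffun 'I_n -> 'I_(K.*2).+1} =>
  \row_i (if i \in I then (nat_of_ord (k i))%:R - K%:R else x 0 i)).
move=> w w_feas.
have /fin_all_exists[k Hk] : forall i, exists k : 'I_(K.*2).+1,
    i \in I -> w 0 i = (nat_of_ord k)%:R - K%:R.
  move=> i; have [iI|iI] := boolP (i \in I); last by exists ord0.
  have [k ->] := int_shift_ord (w_feas.2 i iI) (le_trans (HM w w_feas i iI) M_le).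
  by exists k.
exists (finfun k); apply/matrixP => i j; rewrite (ord1 i) !mxE ffunE.
by case: ifP => // iI; rewrite Hk.
Qed.

Lemma int_configuration_gaps (g : 'rV[R]_n -> R) x : assumption_A3 I A b ->
  exists2 del, 0 < del & forall w, feasible I A b w ->
    let x0 := with_int_part I x w in
    (0 < g x0 -> del <= g x0) /\
    (forall j, 0 < (A *m x0^T) j 0 - b j 0 -> del <= (A *m x0^T) j 0 - b j 0).
Proof.
move=> A3; have [T [y Hy]] := with_int_part_finite x A3.
have [d1 d1_gt0 gap1] := exists_pos_lb_fin (g \o y).
have [d2 d2_gt0 gap2] :=
  exists_pos_lb_fin (fun kj : T * 'I_m => (A *m (y kj.1)^T) kj.2 0 - b kj.2 0).
exists (Num.min d1 d2) => [|w /Hy[k ->]]; first by rewrite lt_min d1_gt0.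
split=> [/gap1|j /(gap2 (k, j))]; apply: le_trans; rewrite ge_min lexx ?orbT //.
Qed.

End Feasibility.

Lemma Psi_eq0 (R : realType) (n : nat) (linf : bool) (I : {set 'I_n}) (m : nat)
  (A : 'M[R]_(m, n)) (b : 'cV[R]_m) (f : 'rV[R]_n -> R) x (D : R) :
  feasible I A b x -> 0 <= D ->
  (forall w, feasible I A b w -> PLball linf I x D w ->
    0 <= dotv (grad f x) (w - x)) ->
  Psi linf I A b f x D = 0.
Proof.
move=> x_feas D_ge0 ge0; rewrite /Psi; set E := [set _ | _ in _].
have E0 : E 0.
  exists x; last by rewrite subrr -(scale0r 0) dotvZr mul0r.
  by split => //; rewrite /PLball /= PLnorm_eq0 // => i _; rewrite !mxE subrr.
have E_le0 : ubound E 0.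
  move=> _ [w [w_feas wb] <-].
  by rewrite -opprB dotvNr oppr_le0; exact: ge0.
apply/eqP; rewrite eq_le; apply/andP; split; first by apply: ge_sup => //; exists 0.
by apply: (ub_le_sup _ E0); exists 0.
Qed.

Section LocalMinimizer.
Variables (R : realType) (n m : nat) (I : {set 'I_n}) (linf : bool).
Variables (A : 'M[R]_(m, n)) (b : 'cV[R]_m).
Variables (f f1 : 'rV[R]_n -> R) (f2 : 'rV[R]_n).
Hypothesis f_diff : forall x, differentiable f x.
Hypothesis f1_cont : forall x y : 'rV[R]_n,
  (forall i, i \notin I -> x 0 i = y 0 i) -> f1 x = f1 y.
Hypothesis fE : forall x, f x = f1 x + \sum_(i in I) f2 0 i * x 0 i.
Implicit Types (x v w : 'rV[R]_n).

Let int_cost v := \sum_(i in I) f2 0 i * v 0 i.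

Lemma f_add_int x v : (forall i, i \notin I -> v 0 i = 0) ->
  f (x + v) = f x + int_cost v.
Proof.
move=> v0; rewrite !fE (@f1_cont (x + v) x) => [|i iI]; last first.
  by rewrite mxE v0 // addr0.
rewrite -addrA -big_split /=; congr (_ + _); apply: eq_bigr => i _.
by rewrite mxE mulrDr.
Qed.

Lemma dotv_grad_int x v : (forall i, i \notin I -> v 0 i = 0) ->
  dotv (grad f x) v = f (x + v) - f x.
Proof.
move=> v0; rewrite dotv_grad // -deriveE // f_add_int // addrC addKr.
apply: derive_affine_line => h; rewrite addrC f_add_int => [|i iI]; last first.
  by rewrite mxE v0 // mulr0.
rewrite /int_cost mulr_sumr; congr (_ + _).
by apply: eq_bigr => i _; rewrite mxE mulrCA.
Qed.

Lemma dotv_grad_ge0_level xb x0 w (D : R) :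
  (forall x, feasible I A b x -> PLball linf I xb D x -> f xb <= f x) ->
  feasible I A b x0 -> feasible I A b w ->
  (forall i, i \in I -> x0 0 i = w 0 i) ->
  (forall i, i \notin I -> x0 0 i = xb 0 i) ->
  f x0 = f xb -> PLball linf I xb D w ->
  0 <= dotv (grad f xb) (w - x0).
Proof.
move=> xb_min x0_feas w_feas x0_int x0_cont level wb.
have shift0 : forall i, i \notin I -> (x0 - xb) 0 i = 0.
  by move=> i iI; rewrite !mxE x0_cont // subrr.
have int_cost0 : int_cost (x0 - xb) = 0.
  by have := f_add_int xb shift0; rewrite addrC subrK level; lra.
rewrite dotv_grad // -deriveE //; apply: derive_ge0_segment_min.
  exact: diff_derivable.
move=> t t_gt0 t_le1.
have -> : f (xb + t *: (w - x0)) = f (x0 + t *: (w - x0)).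
  have -> : x0 + t *: (w - x0) = xb + t *: (w - x0) + (x0 - xb).
    by rewrite [RHS]addrC addrA subrK.
  by rewrite [in RHS]f_add_int // int_cost0 addr0.
apply: xb_min; first exact: feasible_segment (ltW t_gt0) t_le1.
rewrite /PLball /=; apply: le_trans wb; apply: PLnorm_le => i iI.
rewrite !mxE x0_cont // addrAC subrr add0r normrM (ger0_norm (ltW t_gt0)).
by rewrite ler_piMl.
Qed.

Lemma local_minimizer_dotv_grad_ge0 xb :
  assumption_A3 I A b -> local_minimizer linf I A b f xb ->
  exists2 D, 0 < D & forall w, feasible I A b w -> PLball linf I xb D w ->
    0 <= dotv (grad f xb) (w - xb).
Proof.
move=> A3 [xb_feas [D D_gt0 xb_min]].
have [del del_gt0 gap] := int_configuration_gaps (fun y => f y - f xb) xb A3.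
pose a (j : option 'I_m) := if j is Some j then row j A else grad f xb.
have del2_gt0 : 0 < del / 2 by rewrite divr_gt0.
have [d d_gt0 small] := uniform_dotv_PLnorm_small I linf a del2_gt0.
exists (Num.min D d) => [|w w_feas wb]; first by rewrite lt_min D_gt0.
have [gap_f gap_A] := gap w w_feas.
set x0 := with_int_part I xb w in gap_f gap_A.
have x0_int i : i \in I -> x0 0 i = w 0 i by move=> iI; rewrite mxE iI.
have x0_cont i : i \notin I -> x0 0 i = xb 0 i by move=> iI; rewrite mxE (negbTE iI).
have v_int i : i \in I -> (w - x0) 0 i = 0 by move=> iI; rewrite !mxE iI subrr.
have v_small : PLnorm linf I (w - x0) <= d.
  apply: le_trans (le_trans wb _); last by rewrite ge_min lexx orbT.
  by apply: PLnorm_le => i iI; rewrite !mxE (negbTE iI).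
have g_small := small None _ v_int v_small.
have x0_feas : feasible I A b x0.
  split=> [j|i iI]; last by rewrite x0_int //; exact: w_feas.2.
  rewrite leNgt; apply/negP => viol.
  have := gap_A j; rewrite subr_gt0 => /(_ viol).
  have := w_feas.1 j; have := small (Some j) _ v_int v_small.
  rewrite /= !mulmx_tr_dotv dotvDr dotvNr ler_norml.
  lra.
have x0_ball : PLball linf I xb D x0.
  by rewrite /PLball /= PLnorm_eq0 ?ltW // => i iI; rewrite !mxE (negbTE iI) subrr.
have x0_cont0 i : i \notin I -> (x0 - xb) 0 i = 0.
  by move=> iI; rewrite !mxE (negbTE iI) subrr.
have -> : w - xb = (w - x0) + (x0 - xb) by rewrite addrA subrK.
rewrite dotvDr [dotv _ (x0 - xb)]dotv_grad_int // [xb + _]addrC subrK.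
have := xb_min x0 x0_feas x0_ball; rewrite le_eqVlt => /predU1P[level|f_lt].
  rewrite level subrr addr0; apply: dotv_grad_ge0_level xb_min _ _ _ _ _ _ => //.
  by apply: le_trans wb _; rewrite ge_min lexx.
have := gap_f; rewrite subr_gt0 => /(_ f_lt).
by move: g_small; rewrite ler_norml; lra.
Qed.

End LocalMinimizer.

Theorem mainTheorem1 (R : realType) (n : nat) (I : {set 'I_n}) (m : nat)
  (A : 'M[R]_(m, n)) (b : 'cV[R]_m) (f : 'rV[R]_n -> R) (linf : bool)
  (xb : 'rV[R]_n) :
  feasible I A b !=set0 ->
  assumption_A1 f -> assumption_A2 I f -> assumption_A3 I A b ->
  local_minimizer linf I A b f xb ->
  feasible I A b xb /\ critical linf I A b f xb.
Proof.
move=> _ [f_diff _] [f1 [f2 [f1_cont [_ [_ fE]]]]] A3 xb_min.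
have xb_feas := xb_min.1.
have [D D_gt0 grad_ge0] :=
  local_minimizer_dotv_grad_ge0 f_diff f1_cont fE A3 xb_min.
split=> //; split=> //; exists D => //.
exact: Psi_eq0 xb_feas (ltW D_gt0) grad_ge0.
Qed.
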